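(* For every integer $n\ge1$, every $\beta\in[\tfrac12,1]$ and every $x\in\mathbb{R}^n$ with $|x_1|\ge|x_2|\ge\dots\ge|x_n|$, $$\sum_{i=1}^n|x_i|^{\frac{2-\beta}{\beta}}\left(i+\sum_{j>i}\frac{|x_j|}{|x_i|}\right)\le n^\beta\cdot\left(\sum_{i=1}^n|x_i|^{\frac1\beta}\right)^{2-\beta},$$ with equality for $x=c\mathbf{1}$ for any $c\neq0$. *)

From HB Require Import structures.
From mathcomp Require Import all_boot all_order all_algebra.
From mathcomp Require Import all_classical all_reals all_analysis.
Set Implicit Arguments. Unset Strict Implicit. Unset Printing Implicit Defensive.
Import Order.TTheory GRing.Theory Num.Theory.
Local Open Scope ring_scope.

(* Indices are 0-based: the paper's index i corresponds to (i : 'I_n) with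
   value i-1, hence the coefficient i.+1 below. *)
Definition lemma2_lhs (R : realType) (n : nat) (beta : R) (x : 'I_n -> R) : R :=
  \sum_(i < n) `|x i| `^ ((2 - beta) / beta) *
     ((i.+1)%:R + \sum_(j < n | (i < j)%N) `|x j| / `|x i|).

Definition lemma2_rhs (R : realType) (n : nat) (beta : R) (x : 'I_n -> R) : R :=
  (n%:R) `^ beta * (\sum_(i < n) `|x i| `^ (1 / beta)) `^ (2 - beta).

(* Write a_i = |x_i| and p = 1/beta, so that 1 <= p <= 2.  Monotonicity bounds the
   i-th summand of the left-hand side by a_i^p * sum_j a_j^(p-1), termwise: for j <= i
   because a_i^(p-1) <= a_j^(p-1), and for j > i because t <= t^(p-1) for
   t = a_j/a_i in [0,1].
   Summing over i bounds the left-hand side by S * sum_j a_j^(p-1) with S = sum_j a_j^p.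
   Finally a_j^(p-1) = (a_j^p)^(1-beta), and the power-mean inequality
   sum_j b_j^g <= n^(1-g) (sum_j b_j)^g for g = 1 - beta, a consequence of the
   weighted AM-GM inequality, gives the bound n^beta S^(2-beta). *)

From HB Require Import structures.
From mathcomp Require Import all_boot all_order all_algebra.
From mathcomp Require Import all_classical all_reals all_analysis.
From mathcomp Require Import ring lra.
Import Order.TTheory GRing.Theory Num.Theory.
Local Open Scope ring_scope.

Section PowRInequalities.
Variable R : realType.

Lemma weighted_AGM2_powR (g u v : R) : 0 <= g <= 1 -> 0 <= u -> 0 <= v ->
  u `^ g * v `^ (1 - g) <= g * u + (1 - g) * v.
Proof.
move=> /andP[g0 g1] u0 v0.
have [->|gneq0] := eqVneq g 0; first by rewrite powRr0 subr0 powRr1 // !mul1r mul0r add0r.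
have [->|gneq1] := eqVneq g 1; first by rewrite subrr powRr0 powRr1 // !mulr1 mul0r addr0 mul1r.
have g_gt0 : 0 < g by rewrite lt_neqAle eq_sym gneq0.
have g_lt1 : 0 < 1 - g by rewrite subr_gt0 lt_neqAle gneq1.
have := @conjugate_powR R (u `^ g) (v `^ (1 - g)) g^-1 (1 - g)^-1
  (powR_ge0 _ _) (powR_ge0 _ _) _ _ _.
rewrite -!powRrM !mulfV ?gt_eqF // !powRr1 // !invrK [g * u]mulrC [_ * v]mulrC.
by apply; rewrite ?invr_gt0 // subrKC.
Qed.

Lemma ler_sum_powR (I : finType) (g : R) (b : I -> R) :
  0 <= g <= 1 -> (forall i, 0 <= b i) ->
  \sum_i b i `^ g <= #|I|%:R `^ (1 - g) * (\sum_i b i) `^ g.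
Proof.
move=> g01 b0.
set S := \sum_i b i; set n : R := #|I|%:R.
have S0 : 0 <= S by exact: sumr_ge0.
have [S_eq0|S_neq0] := eqVneq S 0.
  have b_eq0 i : b i = 0 by exact: (psumr_eq0P (fun i _ => b0 i) S_eq0).
  under eq_bigr do rewrite b_eq0.
  have [->|gneq0] := eqVneq g 0.
    by rewrite S_eq0 subr0 powRr1 ?ler0n // powRr0 mulr1 sumr_const.
  by rewrite S_eq0 powR0 // mulr0 big1.
have S_gt0 : 0 < S by rewrite lt_neqAle eq_sym S_neq0.
have n_gt0 : 0 < n.
  rewrite ltr0n lt0n; apply: contra_neq S_neq0 => /card0_eq I0.
  by rewrite /S big_pred0.
have AGM_sum : n `^ g * S `^ (1 - g) * \sum_i b i `^ g <= n * S.
  (* weighted AM-GM for n b_i and S, summed over i *)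
  have -> : n * S = \sum_i (g * (n * b i) + (1 - g) * S).
    rewrite big_split /= -!mulr_sumr sumr_const -/S -mulr_natl -/n; ring.
  rewrite mulr_sumr; apply: ler_sum => i _.
  rewrite -mulrA mulrCA -powRM ?ler0n // mulrC.
  by apply: weighted_AGM2_powR; rewrite ?mulr_ge0 ?ler0n.
have -> : n `^ (1 - g) * S `^ g = (n `^ g * S `^ (1 - g))^-1 * (n * S).
  rewrite -[X in S `^ X](subKr 1 g) !powRB ?powRr1 ?ler0n
    ?(gt_eqF n_gt0) ?(gt_eqF S_gt0) ?implybT //.
  by field; rewrite ?gt_eqF ?powR_gt0.
by rewrite ler_pdivlMl ?mulr_gt0 ?powR_gt0.
Qed.

Lemma sum1_ord_leq (n : nat) (i : 'I_n) : \sum_(j < n | (j <= i)%N) (1 : R) = i.+1%:R.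
Proof.
under eq_bigl => j do rewrite -ltnS.
by rewrite -(big_ord_widen n (fun _ => 1 : R) (ltn_ord i)) sumr_const card_ord.
Qed.

Lemma powR_2m1 (p u : R) : 1 <= p -> u `^ (2 * p - 1) = u `^ p * u `^ (p - 1).
Proof.
move=> p_ge1; have -> : 2 * p - 1 = p + (p - 1) by ring.
by rewrite powRD // gt_eqF //; lra.
Qed.

Lemma powR_2m1_le (p u v : R) : 1 <= p -> 0 <= u <= v ->
  u `^ (2 * p - 1) <= u `^ p * v `^ (p - 1).
Proof.
move=> p_ge1 /andP[u0 uv]; rewrite powR_2m1 // ler_wpM2l ?powR_ge0 //.
by apply: ge0_ler_powR; rewrite ?nnegrE ?subr_ge0 // (le_trans u0).
Qed.

Lemma powR_2m1_ratio_le (p u v : R) : 1 <= p <= 2 -> 0 <= v <= u ->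
  u `^ (2 * p - 1) * (v / u) <= u `^ p * v `^ (p - 1).
Proof.
move=> /andP[p_ge1 p_le2] /andP[v0 vu]; have [->|u_neq0] := eqVneq u 0.
  by rewrite powR0 ?mul0r ?mulr_ge0 ?powR_ge0 // gt_eqF //; lra.
have u_gt0 : 0 < u by rewrite lt_neqAle eq_sym u_neq0 (le_trans v0).
rewrite powR_2m1 // -mulrA ler_wpM2l ?powR_ge0 //.
have [->|v_neq0] := eqVneq v 0; first by rewrite mul0r mulr0 powR_ge0.
have vu_gt0 : 0 < v / u by rewrite divr_gt0 // lt_neqAle eq_sym v_neq0.
have -> : v `^ (p - 1) = (v / u) `^ (p - 1) * u `^ (p - 1).
  by rewrite -powRM ?divfK // ltW.
rewrite mulrC ler_wpM2r ?powR_ge0 // ger1_powR ?vu_gt0 ?ler_pdivrMr ?mul1r //; lra.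
Qed.

Lemma powR_2m1_weight_le (n : nat) (p : R) (a : 'I_n -> R) (i : 'I_n) :
  1 <= p <= 2 -> (forall j, 0 <= a j) ->
  (forall j k : 'I_n, (j <= k)%N -> a k <= a j) ->
  a i `^ (2 * p - 1) * (i.+1%:R + \sum_(j < n | (i < j)%N) a j / a i)
    <= a i `^ p * \sum_(j < n) a j `^ (p - 1).
Proof.
move=> p12 a0 a_noninc; have /andP[p_ge1 _] := p12.
rewrite [X in _ <= _ * X](bigID (fun j : 'I_n => (i < j)%N)) /= addrC !mulrDr !mulr_sumr.
under [X in _ <= X + _]eq_bigl => j do rewrite -leqNgt.
apply: lerD.
  rewrite -sum1_ord_leq mulr_sumr; apply: ler_sum => j ji.
  by rewrite mulr1 powR_2m1_le // a0 a_noninc.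
by apply: ler_sum => j ij; rewrite powR_2m1_ratio_le // a0 a_noninc // ltnW.
Qed.

End PowRInequalities.

Lemma lemma2_lhs_cst (R : realType) (n : nat) (beta c : R) : c != 0 ->
  lemma2_lhs beta (fun _ : 'I_n => c) = n%:R ^+ 2 * `|c| `^ ((2 - beta) / beta).
Proof.
move=> c_neq0; rewrite /lemma2_lhs.
under eq_bigr => i _.
  rewrite (eq_bigr (fun _ => 1)) => [|j _]; last by rewrite divff ?normr_eq0.
  have -> : i.+1%:R + \sum_(j < n | (i < j)%N) (1 : R) = n%:R.
    rewrite -sum1_ord_leq -[n in n%:R]card_ord -sumr_const.
    rewrite [RHS](bigID (fun j : 'I_n => (i < j)%N)) addrC /=.
    by congr (_ + _); apply: eq_bigl => j; rewrite -leqNgt.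
  over.
by rewrite sumr_const card_ord -mulr_natl; ring.
Qed.

Lemma lemma2_rhs_cst (R : realType) (n : nat) (beta c : R) :
  lemma2_rhs beta (fun _ : 'I_n => c) = n%:R ^+ 2 * `|c| `^ ((2 - beta) / beta).
Proof.
rewrite /lemma2_rhs sumr_const card_ord -[_ `^ _ *+ n]mulr_natl powRM ?ler0n ?powR_ge0 //.
rewrite mulrA -powRD; last by rewrite addrC subrK pnatr_eq0.
by rewrite addrC subrK powR_mulrn ?ler0n // -powRrM mul1r [_ * (2 - _)]mulrC.
Qed.

Lemma lemma2_lhs_le {R : realType} {n : nat} {beta : R} {x : 'I_n -> R} :
  1 / 2 <= beta <= 1 -> (forall i j : 'I_n, (i <= j)%N -> `|x j| <= `|x i|) ->
  lemma2_lhs beta x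
    <= (\sum_(i < n) `|x i| `^ (1 / beta)) * \sum_(j < n) `|x j| `^ (1 / beta - 1).
Proof.
move=> /andP[beta_ge12 beta_le1] x_noninc; have beta_gt0 : 0 < beta by lra.
have p12 : 1 <= 1 / beta <= 2 by rewrite ler_pdivlMr ?ler_pdivrMr //; lra.
rewrite /lemma2_lhs (_ : (2 - beta) / beta = 2 * (1 / beta) - 1); last by field; lra.
rewrite mulr_suml; apply: ler_sum => i _.
by apply: powR_2m1_weight_le => // j; exact: normr_ge0.
Qed.

Theorem lemma2 (R : realType) (n : nat) (hn : (1 <= n)%N) (beta : R)
  (hbeta : 1 / 2 <= beta <= 1) :
  (forall x : 'I_n -> R,
      (forall i j : 'I_n, (i <= j)%N -> `|x j| <= `|x i|) ->
      lemma2_lhs beta x <= lemma2_rhs beta x) /\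
  (forall c : R, c != 0 -> lemma2_lhs beta (fun _ : 'I_n => c) = lemma2_rhs beta (fun _ : 'I_n => c)).
Proof.
split => [x x_noninc | c c_neq0]; last by rewrite lemma2_lhs_cst // lemma2_rhs_cst.
have /andP[beta_ge12 beta_le1] := hbeta.
have beta_gt0 : 0 < beta by lra.
set p := 1 / beta; set S := \sum_(i < n) `|x i| `^ p.
have S_ge0 : 0 <= S by apply: sumr_ge0 => i _; exact: powR_ge0.
have mean : \sum_(j < n) `|x j| `^ (p - 1) <= n%:R `^ beta * S `^ (1 - beta).
  rewrite (_ : p - 1 = p * (1 - beta)); last by rewrite /p; field; lra.
  under eq_bigr do rewrite powRrM.
  rewrite -[beta in n%:R `^ beta](subKr 1) -[n in n%:R]card_ord.
  by apply: ler_sum_powR => [|j]; rewrite ?powR_ge0 //; lra.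
have -> : lemma2_rhs beta x = S * (n%:R `^ beta * S `^ (1 - beta)).
  rewrite /lemma2_rhs -/p -/S mulrCA (_ : 2 - beta = 1 + (1 - beta)); last by ring.
  by rewrite powRD ?powRr1 // gt_eqF //; lra.
exact: le_trans (lemma2_lhs_le hbeta x_noninc) (ler_wpM2l S_ge0 mean).
Qed.
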